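(* Let $V$ be a finite-dimensional $k$-vector space with $\dim V\ge2$. There exists a complete flag of $S^2V$ whose stabilizer in $\mathrm{SL}(V)$ (acting via its natural action on $S^2V$) is finite.
   Context: $k$ is an algebraically closed field of characteristic $0$; $S^2V$ is the second symmetric power of $V$. *)

From HB Require Import structures.
From mathcomp Require Import all_boot all_order all_algebra.
Set Implicit Arguments. Unset Strict Implicit. Unset Printing Implicit Defensive.
Import GRing.Theory.
Local Open Scope ring_scope.

(* V = k^n (column vectors), SL(V) = n x n matrices of determinant 1.
   S^2 V is realised as the space of symmetric tensors in V (x) V, i.e. the
   symmetric n x n matrices, v.w |-> v w^T + w v^T; g in GL(V) acts by
   X |-> g X g^T. *)

Definition s2dim (n : nat) : nat := (n * n.+1) %/ 2.

Definition in_S2 (k : fieldType) (n : nat) (X : 'M[k]_n) : bool := X^T == X.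

Definition S2_act (k : fieldType) (n : nat) (g X : 'M[k]_n) : 'M[k]_n :=
  g *m X *m g^T.

Definition complete_flag_S2 (k : fieldType) (n : nat)
    (W : nat -> {vspace 'M[k]_n}) : Prop :=
  [/\ forall i, (i <= s2dim n)%N -> \dim (W i) = i,
      forall i, (i < s2dim n)%N -> (W i <= W i.+1)%VS
    & forall X : 'M[k]_n, (X \in W (s2dim n)) = in_S2 X].

Definition flag_stab (k : fieldType) (n : nat)
    (W : nat -> {vspace 'M[k]_n}) (g : 'M[k]_n) : Prop :=
  \det g = 1 /\
  forall i, (i <= s2dim n)%N ->
    forall X : 'M[k]_n, X \in W i -> S2_act g X \in W i.

Definition finite_set_of (T : eqType) (P : T -> Prop) : Prop :=
  exists s : seq T, forall x, P x -> x \in s.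

(* Order the basis of S^2 V so that the first vector is the identity I and the
   first n vectors span the diagonal matrices.  An element g of SL(V) fixing
   this flag satisfies g g^T = c I (it fixes the line of I) and sends every
   diagonal matrix unit E_jj to a diagonal matrix g E_jj g^T, so each column
   of g has at most one nonzero entry.  Then g^T g = c I forces every nonzero
   entry to square to c, and c^n = det (g g^T) = 1, so all entries of g lie in the
   finite set {0} U mu_2n of a (closed) field. *)

From mathcomp Require Import all_boot all_algebra.
Set Implicit Arguments. Unset Strict Implicit. Unset Printing Implicit Defensive.
From mathcomp Require Import zify.
Import GRing.Theory.

Lemma card_ltn_pairs n : #|[pred p : 'I_n * 'I_n | (p.1 < p.2)%N]| = 'C(n, 2).
Proof.
rewrite -sum1_card (eq_bigl (fun p : 'I_n * 'I_n => true && (p.1 < p.2)%N)) //.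
rewrite -(pair_big_dep xpredT (fun i j : 'I_n => (i < j)%N) (fun _ _ => 1)) /=.
rewrite (exchange_big_dep xpredT) //= -bin2_sum big_mkord.
apply: eq_bigr => j _; rewrite -(big_mkord (fun i => i < j) (fun _ => 1)).
rewrite -(big_nat_widen 0 j n xpredT (fun _ => 1)) ?(ltnW (ltn_ord j)) //.
by rewrite sum_nat_const_nat muln1 subn0.
Qed.

(* Listing the diagonal pairs first makes the n-th flag space the diagonal matrices. *)
Definition upper_pairs n : seq ('I_n * 'I_n) :=
  [seq (i, i) | i <- enum 'I_n] ++ enum [pred p : 'I_n * 'I_n | (p.1 < p.2)%N].

Lemma size_upper_pairs n : size (upper_pairs n) = s2dim n.
Proof.
rewrite size_cat size_map size_enum_ord -cardE card_ltn_pairs /s2dim.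
by rewrite divn2 mulnC -[n in (n.+1 * n)%N]/(n.+1.-1) -bin2 binS bin1 addnC.
Qed.

Lemma mem_upper_pairs n (p : 'I_n * 'I_n) :
  (p \in upper_pairs n) = (p.1 <= p.2)%N.
Proof.
case: p => i j; rewrite mem_cat mem_enum inE /=.
have -> : ((i, j) \in [seq (l, l) | l <- enum 'I_n]) = (i == j :> nat).
  apply/mapP/eqP => [[l _ [-> ->]] //|/val_inj ->].
  by exists j; rewrite ?mem_enum.
by rewrite [(i <= j)%N]leq_eqVlt.
Qed.

Lemma upper_pairs_uniq n : uniq (upper_pairs n).
Proof.
rewrite cat_uniq enum_uniq andbT map_inj_uniq ?enum_uniq; last by move=> i j [].
apply/hasPn => p; rewrite mem_enum /= => lt12; apply/mapP => -[i _ eqp].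
by move: lt12; rewrite eqp inE /= ltnn.
Qed.

Local Open Scope ring_scope.

Lemma dim_span_take (K : fieldType) (vT : vectType K) (s : seq vT) i :
  free s -> (i <= size s)%N -> \dim <<take i s>> = i.
Proof.
rewrite -{1}(cat_take_drop i s) => /catl_free/eqP -> ?; exact: size_takel.
Qed.

Lemma span_take_subv (K : fieldType) (vT : vectType K) (s : seq vT) i j :
  (i <= j)%N -> (<<take i s>> <= <<take j s>>)%VS.
Proof. by move=> ij; apply: sub_span => x; rewrite -(take_takel s ij) => /mem_take. Qed.

Lemma span_mx_entry0 (K : fieldType) p q (s : seq 'M[K]_(p, q)) i j (X : 'M_(p, q)) :
  {in s, forall Y : 'M_(p, q), Y i j = 0} -> X \in <<s>>%VS -> X i j = 0.
Proof.
move=> s0 /(@coord_span _ _ _ (in_tuple s)) ->; rewrite summxE; apply: big1 => t _.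
by rewrite mxE s0 ?mulr0 // mem_nth.
Qed.

Section SymmetricUnits.

Variables (k : fieldType) (n : nat).

(* E_ij + E_ji for i != j, but E_ii (not 2 E_ii) on the diagonal. *)
Definition sym_unit_mx (i j : 'I_n) : 'M[k]_n :=
  \matrix_(a, c) (((a == i) && (c == j)) || ((a == j) && (c == i)))%:R.

Lemma tr_sym_unit_mx i j : (sym_unit_mx i j)^T = sym_unit_mx i j.
Proof.
by apply/matrixP => a c; rewrite !mxE orbC; congr (_%:R); congr (_ || _); apply: andbC.
Qed.

Lemma sym_unit_mx_upper (i j a c : 'I_n) : (i <= j)%N -> (a <= c)%N ->
  sym_unit_mx i j a c = ((i, j) == (a, c))%:R.
Proof.
move=> hij hac; rewrite mxE xpair_eqE; congr (_%:R); rewrite -!val_eqE /=.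
case: (eqVneq (a : nat) i) => [->|]; case: (eqVneq (c : nat) j) => [->|] //=;
  rewrite ?orbF ?eqxx //= ?andbF //;
  case: (eqVneq (a : nat) j); case: (eqVneq (c : nat) i) => //=; lia.
Qed.

Lemma sum_sym_unit_diag : \sum_i sym_unit_mx i i = 1%:M.
Proof.
apply/matrixP => a c; rewrite summxE !mxE.
under eq_bigr do rewrite mxE orbb.
case: (eqVneq a c) => [<-|ne].
  rewrite (bigD1 a) //= eqxx big1 ?addr0 // => i ai.
  by rewrite eq_sym (negPf ai).
by apply: big1 => i _; case: (eqVneq a i) => //= <-; rewrite eq_sym (negPf ne).
Qed.

Lemma conj_sym_unit_diagE (g : 'M[k]_n) j a b :
  (g *m sym_unit_mx j j *m g^T) a b = g a j * g b j.
Proof.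
have gE l : (g *m sym_unit_mx j j) a l = g a j * (l == j)%:R.
  rewrite mxE (bigD1 j) //= big1 ?addr0; first by rewrite mxE eqxx orbb.
  by move=> i ij; rewrite mxE orbb (negPf ij) mulr0.
rewrite mxE (bigD1 j) //= big1 ?addr0; first by rewrite gE eqxx mulr1 mxE.
by move=> i ij; rewrite gE (negPf ij) mulr0 mul0r.
Qed.

End SymmetricUnits.

Section FlagBasis.

Variables (k : fieldType) (m : nat).
Local Notation n := m.+1.
Local Notation sym_unit_mx := (@sym_unit_mx k n).

Lemma free_sym_units : free [seq sym_unit_mx p.1 p.2 | p <- upper_pairs n].
Proof.
set s := map _ _; apply/(@freeP _ _ _ (in_tuple s)) => c hc t.
have hs : size s = size (upper_pairs n) by rewrite size_map.
pose pt i := nth (ord0, ord0) (upper_pairs n) i.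
have ptE (i : 'I_(size s)) : s`_i = sym_unit_mx (pt i).1 (pt i).2.
  by rewrite (nth_map (ord0, ord0)) // -hs.
have pt_le (i : 'I_(size s)) : ((pt i).1 <= (pt i).2)%N.
  by rewrite -mem_upper_pairs mem_nth // -hs.
move/matrixP/(_ (pt t).1 (pt t).2): hc; rewrite summxE mxE (bigD1 t) //= big1.
  by rewrite addr0 mxE ptE sym_unit_mx_upper // -surjective_pairing eqxx mulr1.
move=> i it; rewrite mxE ptE sym_unit_mx_upper // -!surjective_pairing.
by rewrite nth_uniq ?upper_pairs_uniq -?hs // (inj_eq val_inj) (negPf it) mulr0.
Qed.

Definition flag_basis : seq 'M[k]_n :=
  [seq if p == (ord0, ord0) then 1%:M else sym_unit_mx p.1 p.2 | p <- upper_pairs n].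

Lemma take_flag_basis :
  take n flag_basis = [seq if i == ord0 then 1%:M else sym_unit_mx i i | i <- enum 'I_n].
Proof.
rewrite /flag_basis /upper_pairs map_cat take_size_cat; last first.
  by rewrite !size_map -enumT size_enum_ord.
by rewrite -map_comp; apply: eq_map => i /=; rewrite xpair_eqE andbb.
Qed.

Lemma sym_unit_diag_in_flag i : sym_unit_mx i i \in <<take n flag_basis>>%VS.
Proof.
have mem_take_flag j :
    (if j == ord0 then 1%:M else sym_unit_mx j j) \in <<take n flag_basis>>%VS.
  by apply: memv_span; rewrite take_flag_basis map_f ?mem_enum.
have /= := mem_take_flag i; case: eqP => [-> one_in|_ //].
have -> : sym_unit_mx ord0 ord0 = 1%:M - \sum_(j | j != ord0) sym_unit_mx j j.
  by rewrite -sum_sym_unit_diag (bigD1 ord0) //= addrK.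
apply: memvB => //; apply: memv_suml => j nj.
by have := mem_take_flag j; rewrite (negPf nj).
Qed.

Lemma sym_unit_in_flag (p : 'I_n * 'I_n) :
  p \in upper_pairs n -> sym_unit_mx p.1 p.2 \in <<flag_basis>>%VS.
Proof.
move=> hp; case: (eqVneq p (ord0, ord0)) => [->|p0].
  by apply: subvP (sym_unit_diag_in_flag ord0); apply/sub_span/mem_take.
by apply/memv_span/mapP; exists p; rewrite ?(negPf p0).
Qed.

Lemma free_flag_basis : free flag_basis.
Proof.
rewrite /free eqn_leq dim_span /=.
have /eqP := free_sym_units; rewrite !size_map => <-.
apply/dimvS/span_subvP => _ /mapP[p hp ->]; exact: sym_unit_in_flag.
Qed.

Lemma sym_expand (X : 'M[k]_n) : X^T = X ->
  X = \sum_(p | p \in upper_pairs n) X p.1 p.2 *: sym_unit_mx p.1 p.2.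
Proof.
set Y := \sum_(p | _) _ => XT.
have YE (a c : 'I_n) : (a <= c)%N -> Y a c = X a c.
  move=> ac; rewrite summxE (bigD1 (a, c)) ?mem_upper_pairs //= big1 ?addr0.
    by rewrite mxE sym_unit_mx_upper // eqxx mulr1.
  move=> p /andP[]; rewrite mem_upper_pairs => hp np.
  by rewrite mxE sym_unit_mx_upper // -surjective_pairing (negPf np) mulr0.
have YT : Y^T = Y.
  by rewrite linear_sum; apply: eq_bigr => p _; rewrite linearZ /= tr_sym_unit_mx.
apply/matrixP => a c; case: (leqP a c) => [/YE //|ca].
by rewrite -XT -YT !mxE YE // ltnW.
Qed.

Lemma mem_span_flag_basis (X : 'M[k]_n) : (X \in <<flag_basis>>%VS) = (X^T == X).
Proof.
apply/idP/eqP => [|/sym_expand ->]; last first.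
  by apply: memv_suml => p hp; apply/memvZ/sym_unit_in_flag.
move/coord_span ->; rewrite linear_sum; apply: eq_bigr => i _; rewrite linearZ /=.
have /mapP[p _ ->] : (in_tuple flag_basis)`_i \in flag_basis.
  by rewrite mem_nth // size_map size_cat size_map -!cardE.
by case: ifP; rewrite ?trmx1 ?tr_sym_unit_mx.
Qed.

Lemma complete_flag_take_flag_basis :
  complete_flag_S2 (fun i => <<take i flag_basis>>%VS).
Proof.
have size_flag : size flag_basis = s2dim n by rewrite size_map size_upper_pairs.
split=> [i|i _|X]; rewrite -?size_flag.
- exact/dim_span_take/free_flag_basis.
- exact: span_take_subv.
- by rewrite take_size mem_span_flag_basis.
Qed.

Lemma flag_diag_offdiag0 (X : 'M[k]_n) a b :
  X \in <<take n flag_basis>>%VS -> a != b -> X a b = 0.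
Proof.
move=> + ab; apply: span_mx_entry0 => Y; rewrite take_flag_basis.
case/mapP=> i _ ->; case: ifP => _; rewrite !mxE ?(negPf ab) //= orbb.
by case: (eqVneq a i) ab => //= -> /negPf; rewrite eq_sym => ->.
Qed.

Lemma leq_n_s2dim : (n <= s2dim n)%N.
Proof. by rewrite -size_upper_pairs size_cat size_map size_enum_ord leq_addr. Qed.

Section Stabilizer.

Variable g : 'M[k]_n.
Hypothesis g_stab : flag_stab (fun i => <<take i flag_basis>>%VS) g.

Lemma flag_stab_col_orth j a b : a != b -> g a j * g b j = 0.
Proof.
rewrite -conj_sym_unit_diagE; apply: flag_diag_offdiag0.
exact: g_stab.2 _ leq_n_s2dim _ (sym_unit_diag_in_flag j).
Qed.

Lemma flag_stab_scalar : exists c, g *m g^T = c%:M.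
Proof.
have take1 : take 1 flag_basis = [:: 1%:M].
  by rewrite /flag_basis /upper_pairs enum_ordSl /= take0.
have /= := g_stab.2 1%N (leq_trans (ltn0Sn m) leq_n_s2dim) 1%:M.
rewrite take1 span_seq1 memv_line /S2_act mulmx1 => /(_ isT) /vlineP[c ->].
by exists c; rewrite scalemx1.
Qed.

End Stabilizer.

End FlagBasis.

Lemma scalar_orthogonal_entries (K : fieldType) n (g : 'M[K]_n) c :
    \det g = 1 -> g *m g^T = c%:M ->
    (forall j a b, a != b -> g a j * g b j = 0) ->
  forall a j, g a j = 0 \/ g a j ^+ (2 * n) = 1.
Proof.
move=> det_g ggT col0 a j.
have cn1 : c ^+ n = 1 by rewrite -det_scalar -ggT det_mulmx det_tr det_g mulr1.
have gTg : g^T *m g = c%:M.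
  have g_unit : g \in unitmx by rewrite unitmxE det_g unitr1.
  rewrite -[g^T](mulKmx g_unit) ggT -mulmxA -scalar_mxC mulmxA.
  by rewrite mulVmx // mul1mx.
have [|gaj0] := eqVneq (g a j) 0; [by left | right].
have : (g^T *m g) j j = g a j ^+ 2.
  rewrite mxE (bigD1 a) //= mxE big1 ?addr0 // => b ba.
  rewrite eq_sym in ba; have /eqP := col0 j a b ba.
  by rewrite mxE mulf_eq0 (negPf gaj0) /= => /eqP ->; rewrite mulr0.
by rewrite gTg mxE eqxx mulr1n exprM => <-.
Qed.

Lemma finite_matrices (V : nmodType) p q (P : V -> Prop) :
  finite_set_of P -> finite_set_of (fun A : 'M[V]_(p, q) => forall i j, P (A i j)).
Proof.
case=> s sP; pose F := {ffun 'I_p * 'I_q -> 'I_(size s).+1}.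
exists [seq \matrix_(i, j) s`_(f (i, j)) | f : F <- enum F] => A /(_ _ _)/sP As.
apply/mapP; exists [ffun ij => inord (index (A ij.1 ij.2) s)]; rewrite ?mem_enum //.
apply/matrixP => i j; rewrite mxE ffunE inordK ?nth_index //.
by rewrite ltnS ltnW // index_mem.
Qed.

Lemma finite_unity_roots0 (K : closedFieldType) N : (0 < N)%N ->
  finite_set_of (fun x : K => x = 0 \/ x ^+ N = 1).
Proof.
move=> N_gt0; pose P : {poly K} := 'X * ('X^N - 1).
have [rs P_roots] := closed_field_poly_normal P.
exists rs => x x_root; have : root P x.
  rewrite rootM rootX -[root _ x]/(N.-unity_root x) unity_rootE.
  by case: x_root => ->; rewrite eqxx ?orbT.
rewrite P_roots rootZ ?root_prod_XsubC // lead_coef_eq0 mulf_neq0 ?polyX_eq0 //.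
by rewrite -size_poly_eq0 size_XnsubC.
Qed.

Theorem lemma7p2 (k : closedFieldType) (hchar : [pchar k] =i pred0)
  (n : nat) (hn : (2 <= n)%N) :
  exists W : nat -> {vspace 'M[k]_n},
    complete_flag_S2 W /\ finite_set_of (flag_stab W).
Proof.
case: n hn => [//|m] _; exists (fun i => <<take i (flag_basis k m)>>%VS).
split; first exact: complete_flag_take_flag_basis.
have [s s_entries] :=
  finite_matrices m.+1 m.+1 (finite_unity_roots0 k (muln_gt0 2 m.+1)).
exists s => g g_stab; apply: s_entries => a j.
have [c ggT] := flag_stab_scalar g_stab.
exact: scalar_orthogonal_entries g_stab.1 ggT (flag_stab_col_orth g_stab) a j.
Qed.
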